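(* Let $S$ be a finite set of at least three points in the plane, $v>1$, and $s\in S$. Let $H_s$ be an axis-aligned speed-$v$ highway cross that minimizes $\max_{q\in S}t_{H}(s,q)$ over all axis-aligned speed-$v$ highway crosses $H$. Then the travel-time diameter $\max_{p,q\in S}t_{H_s}(p,q)$ is at most $2\delta_{\mathrm{opt}}$, where $\delta_{\mathrm{opt}}$ is the travel-time diameter of $S$ for an optimal axis-aligned speed-$v$ highway cross.
   Context: The underlying metric is the $L_1$-metric. An axis-aligned highway cross is the union $H$ of a horizontal and a vertical line; one travels with speed $1$ off $H$ ($L_1$-lengths) and with speed $v$ along either line of $H$. The travel time $t_H(p,q)$ is the minimum time of a path from $p$ to $q$; the travel-time diameter of $S$ is $\max_{p,q\in S}t_H(p,q)$, and an optimal highway cross minimizes it. *)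

From mathcomp Require Import all_boot all_order all_algebra.
From mathcomp Require Import boolp classical_sets reals.
Set Implicit Arguments. Unset Strict Implicit. Unset Printing Implicit Defensive.
Import Order.TTheory GRing.Theory Num.Theory.
Local Open Scope ring_scope.
Local Open Scope classical_set_scope.

Section Highway.
Variable R : realType.

Definition plane_pt := (R * R)%type.

Definition d1 (p q : plane_pt) : R := `|p.1 - q.1| + `|p.2 - q.2|.

(* An axis-aligned highway cross, encoded by (a, b): the union of the
   vertical line x = a and the horizontal line y = b. *)
Definition cross := (R * R)%type.

Definition on_highway (H : cross) (p q : plane_pt) : bool :=
  ((p.1 == H.1) && (q.1 == H.1)) || ((p.2 == H.2) && (q.2 == H.2)).

Definition seg_time (v : R) (H : cross) (p q : plane_pt) : R :=
  if on_highway H p q then d1 p q / v else d1 p q.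

Fixpoint chain_time (v : R) (H : cross) (x : plane_pt) (l : seq plane_pt) : R :=
  if l is y :: l' then seg_time v H x y + chain_time v H y l' else 0.

Definition path_time (v : R) (H : cross) (p : plane_pt) (l : seq plane_pt) (q : plane_pt) : R :=
  chain_time v H p (rcons l q).

Definition travel_time (v : R) (H : cross) (p q : plane_pt) : R :=
  inf [set t | exists l : seq plane_pt, t = path_time v H p l q].

Definition eccentricity (v : R) (H : cross) (S : seq plane_pt) (s : plane_pt) : R :=
  \big[Num.max/0]_(q <- S) travel_time v H s q.

Definition tt_diameter (v : R) (H : cross) (S : seq plane_pt) : R :=
  \big[Num.max/0]_(p <- S) \big[Num.max/0]_(q <- S) travel_time v H p q.

End Highway.

From mathcomp Require Import all_boot all_order all_algebra.
From mathcomp Require Import boolp classical_sets reals.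
Set Implicit Arguments. Unset Strict Implicit. Unset Printing Implicit Defensive.
Import Order.TTheory GRing.Theory Num.Theory.
Local Open Scope ring_scope.
Local Open Scope classical_set_scope.

(* For any positive speed, travel time along a fixed highway cross is a
   pseudometric: reversing a path keeps its time, and concatenating paths adds
   times.  Hence for s in S the diameter of S is at most twice the eccentricity
   of s.  Since H_s minimises that eccentricity,
   diam_{H_s} <= 2 ecc_{H_s}(s) <= 2 ecc_{H_opt}(s) <= 2 diam_{H_opt}. *)

Section TravelTime.
Variable R : realType.
Variable v : R.
Hypothesis v_gt0 : 0 < v.
Variable H : cross R.

Lemma seg_time_ge0 (p q : plane_pt R) : 0 <= seg_time v H p q.
Proof.
have d1_ge0 : 0 <= d1 p q by apply: addr_ge0.
by rewrite /seg_time; case: ifP => _ //; rewrite divr_ge0 // ltW.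
Qed.

Lemma seg_timeC (p q : plane_pt R) : seg_time v H p q = seg_time v H q p.
Proof.
rewrite /seg_time /d1 /on_highway (distrC p.1) (distrC p.2).
by rewrite (andbC (p.1 == _)) (andbC (p.2 == _)).
Qed.

Lemma chain_time_ge0 x l : 0 <= chain_time v H x l.
Proof. by elim: l x => [|y l IHl] x //=; rewrite addr_ge0 ?seg_time_ge0. Qed.

Lemma chain_time_cat x l1 l2 :
  chain_time v H x (l1 ++ l2) = chain_time v H x l1 + chain_time v H (last x l1) l2.
Proof. by elim: l1 x => [|y l IHl] x /=; rewrite ?add0r // IHl addrA. Qed.

Lemma chain_time_rev x l y :
  chain_time v H x (rcons l y) = chain_time v H y (rcons (rev l) x).
Proof.
elim: l x => [|z l IHl] x /=; first by rewrite seg_timeC.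
rewrite IHl rev_cons -[in RHS]cats1 chain_time_cat last_rcons /= addr0 addrC.
by rewrite seg_timeC.
Qed.

Definition path_times (p q : plane_pt R) :=
  [set t | exists l : seq (plane_pt R), t = path_time v H p l q].

Lemma path_times_neq0 p q : path_times p q !=set0.
Proof. by exists (path_time v H p [::] q); exists [::]. Qed.

Lemma travel_time_le_path p q l : travel_time v H p q <= path_time v H p l q.
Proof.
apply: ge_inf; last by exists l.
by exists 0 => _ [l' ->]; apply: chain_time_ge0.
Qed.

Lemma le_travel_time p q x :
  (forall l, x <= path_time v H p l q) -> x <= travel_time v H p q.
Proof. by move=> x_le; apply: lb_le_inf (path_times_neq0 p q) _ => _ [l ->]. Qed.

Lemma travel_time_ge0 p q : 0 <= travel_time v H p q.
Proof. by apply: le_travel_time => l; apply: chain_time_ge0. Qed.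

Lemma travel_timeC p q : travel_time v H p q = travel_time v H q p.
Proof.
suff le_sym a b : travel_time v H a b <= travel_time v H b a.
  by apply/le_anti; rewrite !le_sym.
apply: le_travel_time => l; rewrite /path_time chain_time_rev.
exact: travel_time_le_path.
Qed.

Lemma travel_time_triangle p s q :
  travel_time v H p q <= travel_time v H p s + travel_time v H s q.
Proof.
rewrite -lerBlDr; apply: le_travel_time => l1; rewrite lerBlDl -lerBlDr.
apply: le_travel_time => l2; rewrite lerBlDl addrC.
have := travel_time_le_path p q (l1 ++ s :: l2).
by rewrite /path_time -cat_rcons rcons_cat chain_time_cat last_rcons addrC.
Qed.

Lemma eccentricity_ge0 S s : s \in S -> 0 <= eccentricity v H S s.
Proof.
move=> sS; apply: le_trans (travel_time_ge0 s s) _.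
exact: le_bigmax_seq.
Qed.

Lemma eccentricity_le_tt_diameter S s :
  s \in S -> eccentricity v H S s <= tt_diameter v H S.
Proof.
by move=> sS; apply: (le_bigmax_seq _ s xpredT
  (fun p => \big[Num.max/0]_(q <- S) travel_time v H p q)).
Qed.

Lemma tt_diameter_le_eccentricity S s :
  s \in S -> tt_diameter v H S <= 2 * eccentricity v H S s.
Proof.
move=> sS; have ecc2_ge0 := mulr_ge0 (ler0n R 2) (eccentricity_ge0 sS).
have ecc_ub q : q \in S -> travel_time v H s q <= eccentricity v H S s.
  by move=> qS; apply: le_bigmax_seq.
rewrite /tt_diameter big_seq; apply: bigmax_le => // p pS.
rewrite big_seq; apply: bigmax_le => // q qS.
apply: le_trans (travel_time_triangle p s q) _.
rewrite mulr2n mulrDl mul1r lerD ?ecc_ub //.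
by rewrite travel_timeC ecc_ub.
Qed.

End TravelTime.

Theorem lemma4 (R : realType) (S : seq (plane_pt R)) (v : R) (s : plane_pt R)
    (Hs : cross R) :
  uniq S -> (3 <= size S)%N -> 1 < v -> s \in S ->
  (forall H : cross R, eccentricity v Hs S s <= eccentricity v H S s) ->
  forall Hopt : cross R,
    (forall H : cross R, tt_diameter v Hopt S <= tt_diameter v H S) ->
    tt_diameter v Hs S <= 2 * tt_diameter v Hopt S.
Proof.
move=> _ _ v_gt1 sS Hs_min Hopt _.
have v_gt0 : 0 < v by apply: lt_trans v_gt1.
apply: le_trans (tt_diameter_le_eccentricity v_gt0 Hs sS) _.
rewrite ler_wpM2l //; apply: le_trans (Hs_min Hopt) _.
exact: eccentricity_le_tt_diameter.
Qed.
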